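(* Let $(u_n)_{n<\omega}$ be an $\omega$-sequence of words such that the product $u_0u_1\cdots u_n$ is prime for each $n<\omega$. Then the $\omega$-product $u_0u_1u_2\cdots$ is prime.
   Context: $A$ is a finite alphabet with a linear order $<_A$. Words are sequences of letters indexed by countable ordinals; $x^\alpha$ is the concatenation of $\alpha$ copies of $x$. A suffix of $x$ is $x[\gamma,|x|)$, proper if $0<\gamma<|x|$. Write $x<_{str}x'$ if there are letters $a<_Ab$ and words $y,z,z'$ with $x=yaz$, $x'=ybz'$; $x\le_{lex}x'$ iff $x$ is a prefix of $x'$ or $x<_{str}x'$. A word $x$ is primitive if $x=y^\alpha$ implies $\alpha=1$ and $y=x$. A word $w$ is prime if it is primitive and every proper suffix $z$ of $w$ satisfies $w\le_{lex}z$. *)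

(* transfinite words are represented
   concretely as labelled well-ordered countable types, with word equality
   being label- and order-preserving isomorphism. *)
From mathcomp Require Import all_boot all_order.
Set Implicit Arguments.
Unset Strict Implicit.
Unset Printing Implicit Defensive.
Import Order.TTheory.

Record ostruct := OS { os_car :> Type; os_lt : os_car -> os_car -> Prop }.

Definition is_countable_wo (s : ostruct) : Prop :=
  [/\ (forall x : s, ~ os_lt x x),
      (forall x y z : s, os_lt x y -> os_lt y z -> os_lt x z),
      (forall x y : s, os_lt x y \/ x = y \/ os_lt y x),
      well_founded (@os_lt s) &
      exists f : s -> nat, forall x y, f x = f y -> x = y].

(* A countable ordinal is (up to isomorphism) a countable well-order. *)
Definition is_ordinal (s : ostruct) : Prop := is_countable_wo s.

Definition is_one (s : ostruct) : Prop := exists a : s, forall b : s, b = a.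

Section Words.
Context {disp : Order.disp_t} {A : finOrderType disp}.

Record lstruct := LS { ls_ord :> ostruct; ls_lab : ls_ord -> A }.

Definition is_word (w : lstruct) : Prop := is_countable_wo w.

Definition word_eq (s t : lstruct) : Prop :=
  exists (f : s -> t) (g : t -> s),
    [/\ (forall x, g (f x) = x), (forall y, f (g y) = y),
        (forall x y, os_lt x y <-> os_lt (f x) (f y)) &
        (forall x, ls_lab (f x) = ls_lab x)].

Definition concat (x y : lstruct) : lstruct :=
  @LS (@OS (x + y)%type
        (fun p q => match p, q with
                    | inl i, inl j => os_lt i j
                    | inr i, inr j => os_lt i j
                    | inl _, inr _ => True
                    | inr _, inl _ => False end))
      (fun p => match p with inl i => ls_lab i | inr j => ls_lab j end).

Definition letter (a : A) : lstruct :=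
  @LS (@OS unit (fun _ _ => False)) (fun _ => a).

(* x ^ alpha : alpha copies of x, i.e. index set alpha x |x| ordered
   lexicographically with the alpha-coordinate major *)
Definition power (x : lstruct) (alpha : ostruct) : lstruct :=
  @LS (@OS (alpha * x)%type
        (fun p q => os_lt p.1 q.1 \/ (p.1 = q.1 /\ os_lt p.2 q.2)))
      (fun p => ls_lab p.2).

Definition suffix (x : lstruct) (gamma : x) : lstruct :=
  @LS (@OS {i : x | ~ os_lt i gamma} (fun p q => os_lt (sval p) (sval q)))
      (fun p => ls_lab (sval p)).

Definition omega_lt (u : nat -> lstruct) (p q : {k : nat & u k}) : Prop :=
  (projT1 p < projT1 q)%N \/
  exists k (i j : u k), [/\ p = existT _ k i, q = existT _ k j & os_lt i j].

Definition omega_prod (u : nat -> lstruct) : lstruct :=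
  @LS (@OS {k : nat & u k} (@omega_lt u)) (fun p => ls_lab (projT2 p)).

Definition prod_upto (u : nat -> lstruct) (n : nat) : lstruct :=
  @LS (@OS {p : {k : nat & u k} | (projT1 p <= n)%N}
           (fun p q => omega_lt (sval p) (sval q)))
      (fun p => ls_lab (projT2 (sval p))).

Definition primitive (x : lstruct) : Prop :=
  forall (y : lstruct) (alpha : ostruct),
    is_word y -> is_ordinal alpha -> word_eq x (power y alpha) ->
    is_one alpha /\ word_eq y x.

Definition is_prefix (x x' : lstruct) : Prop :=
  exists z : lstruct, is_word z /\ word_eq x' (concat x z).

Definition str_lt (x x' : lstruct) : Prop :=
  exists (a b : A) (y z z' : lstruct),
    [/\ (a < b)%O, [/\ is_word y, is_word z & is_word z'],
        word_eq x (concat y (concat (letter a) z)) &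
        word_eq x' (concat y (concat (letter b) z'))].

Definition lex_le (x x' : lstruct) : Prop := is_prefix x x' \/ str_lt x x'.

(* w prime: primitive and w <=_lex z for every proper suffix z of w
   (gamma ranges over positions of w with 0 < gamma) *)
Definition prime_word (w : lstruct) : Prop :=
  primitive w /\
  forall gamma : w, (exists delta : w, os_lt delta gamma) ->
    lex_le w (suffix gamma).

End Words.

(* The prefix embeddings of one word into another are unique, so the embeddings of the
   finite products u_0...u_n into a fixed word agree with each other and glue to an
   embedding of the omega-product.  Hence, for a proper suffix v of u_0u_1..., either some
   finite product is strictly below the corresponding suffix of itself, and this strict
   comparison persists in the limit, or every finite product is a prefix of v, and then so
   is u_0u_1....
   For primitivity, suppose u_0u_1... = y^alpha with alpha >= 2 and cut at a finite stage n
   that contains the start of the second copy of y.  If the cut splits some copy, the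
   suffix of u_0...u_n at the start of that copy is a prefix of y, hence a proper prefix of
   u_0...u_n, which contradicts primality; if it splits no copy, u_0...u_n is itself a
   power y^beta with beta >= 2, which contradicts primitivity. *)

From Stdlib Require Import Classical ClassicalEpsilon ProofIrrelevance.
From Stdlib Require Import Eqdep_dec Wellfounded PeanoNat.
From Pilot Require Import Defs.
From mathcomp Require Import all_boot all_order.
Set Implicit Arguments.
Unset Strict Implicit.
Unset Printing Implicit Defensive.
Import Order.TTheory.

Section WellOrders.
Variable X : ostruct.
Hypothesis hX : is_countable_wo X.

Lemma wo_irrefl (a : X) : ~ os_lt a a.
Proof. by case: hX => irr _ _ _ _; apply: irr. Qed.

Lemma wo_trans (a b c : X) : os_lt a b -> os_lt b c -> os_lt a c.
Proof. by case: hX => _ tr _ _ _; apply: tr. Qed.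

Lemma wo_total (a b : X) : os_lt a b \/ a = b \/ os_lt b a.
Proof. by case: hX => _ _ tot _ _; apply: tot. Qed.

Lemma wo_wf : well_founded (@os_lt X).
Proof. by case: hX. Qed.

Lemma wo_asym (a b : X) : os_lt a b -> ~ os_lt b a.
Proof. by move=> ab ba; apply: (wo_irrefl (wo_trans ab ba)). Qed.

Lemma wo_eq_nlt (a b : X) : ~ os_lt a b -> ~ os_lt b a -> a = b.
Proof. by move=> nab nba; case: (wo_total a b) => [|[|]]. Qed.

Lemma wo_gt_nlt (a b : X) : ~ os_lt a b -> a <> b -> os_lt b a.
Proof. by move=> nab neq; case: (wo_total a b) => [|[|]]. Qed.

Lemma wo_min (x : X) : exists m : X, forall y, ~ os_lt y m.
Proof.
elim/(well_founded_ind wo_wf): x => x IH.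
case: (classic (exists y, os_lt y x)) => [[y yx]|no_below]; first exact: IH yx.
by exists x => y yx; apply: no_below; exists y.
Qed.

End WellOrders.

Definition strict_total (X : ostruct) : Prop :=
  (forall x : X, ~ os_lt x x) /\ (forall x y : X, os_lt x y \/ x = y \/ os_lt y x).

Lemma wo_strict_total (X : ostruct) : is_countable_wo X -> strict_total X.
Proof. by move=> hX; split; [exact: wo_irrefl | exact: wo_total]. Qed.

Definition subOS (X : ostruct) (P : X -> Prop) : ostruct :=
  @OS {x : X | P x} (fun a b => os_lt (sval a) (sval b)).

Lemma sval_inj (T : Type) (P : T -> Prop) (a b : {x : T | P x}) : sval a = sval b -> a = b.
Proof. by case: a b => [x px] [y py] /= e; subst y; rewrite (proof_irrelevance _ px py). Qed.

Lemma sub_wo (X : ostruct) (P : X -> Prop) :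
  is_countable_wo X -> is_countable_wo (subOS P).
Proof.
move=> hX; have [f f_inj] : exists f : X -> nat, injective f by case: hX.
split.
- by move=> a; apply: (wo_irrefl hX).
- by move=> a b c; apply: (wo_trans hX).
- move=> a b; case: (wo_total hX (sval a) (sval b)) => [|[/sval_inj|]];
    [left | right; left | right; right] => //.
- exact: (wf_inverse_image _ _ _ (@sval _ _) (wo_wf hX)).
- by exists (fun a => f (sval a)) => a b /f_inj /sval_inj.
Qed.

Section Words.
Context {disp : Order.disp_t} {A : finOrderType disp}.
Notation lstr := (@lstruct disp A).

Definition subLS (X : lstr) (P : X -> Prop) : lstr :=
  @LS disp A (subOS P) (fun p => ls_lab (sval p)).

Lemma sub_word (X : lstr) (P : X -> Prop) : is_word X -> is_word (subLS P).
Proof. exact: sub_wo. Qed.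

Lemma suffix_word (X : lstr) (g : X) : is_word X -> is_word (Defs.suffix g).
Proof. exact: sub_word. Qed.

Lemma concat_strict_total (X Y : lstr) :
  strict_total X -> strict_total Y -> strict_total (concat X Y).
Proof.
move=> [irX totX] [irY totY]; split; first by case.
case=> [x|y] [x'|y'] /=; try by [left | right; right].
- by case: (totX x x') => [|[->|]]; auto.
- by case: (totY y y') => [|[->|]]; auto.
Qed.

Lemma letter_strict_total (a : A) : strict_total (letter a).
Proof. by split => [[] | [] []] //; right; left. Qed.

Lemma power_strict_total (y : lstr) (alpha : ostruct) :
  strict_total alpha -> strict_total y -> strict_total (power y alpha).
Proof.
move=> [irA totA] [irY totY]; split.
- by case=> a i [|[_]]; [apply: irA | apply: irY].
- case=> a i [b j] /=; case: (totA a b) => [|[<-|]]; auto.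
  by case: (totY i j) => [|[<-|]]; auto.
Qed.

Lemma power_lt_same_copy (y : lstr) (alpha : ostruct) (a : alpha) (i j : y) :
  (forall b : alpha, ~ os_lt b b) ->
  (@os_lt (power y alpha) (a, i) (a, j) <-> os_lt i j).
Proof. by move=> irA; split => [[/irA|[]] | ij] //; right. Qed.

Lemma word_eq_of_bij_rel (X Y : lstr) (R : X -> Y -> Prop) :
  strict_total X -> strict_total Y ->
  (forall x, exists y, R x y) -> (forall y, exists x, R x y) ->
  (forall x y x' y', R x y -> R x' y' -> (os_lt x x' <-> os_lt y y')) ->
  (forall x y, R x y -> ls_lab x = ls_lab y) ->
  word_eq X Y.
Proof.
move=> [irX totX] [irY totY] R_total R_onto R_lt R_lab.
have R_fun x y y' : R x y -> R x y' -> y = y'.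
  move=> h h'; case: (totY y y') => [|[//|]] lt; case: (irX x).
  - exact/(R_lt _ _ _ _ h h').
  - exact/(R_lt _ _ _ _ h' h).
have R_inj x x' y : R x y -> R x' y -> x = x'.
  move=> h h'; case: (totX x x') => [|[//|]] lt; case: (irY y).
  - exact/(R_lt _ _ _ _ h h').
  - exact/(R_lt _ _ _ _ h' h).
pose f x := sval (constructive_indefinite_description _ (R_total x)).
pose g y := sval (constructive_indefinite_description _ (R_onto y)).
have Rf x : R x (f x) by rewrite /f; case: constructive_indefinite_description.
have Rg y : R (g y) y by rewrite /g; case: constructive_indefinite_description.
exists f, g; split.
- by move=> x; apply: R_inj (Rg _) (Rf x).
- by move=> y; apply: R_fun (Rf _) (Rg y).
- by move=> x x'; apply: R_lt.
- by move=> x; rewrite (R_lab _ _ (Rf x)).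
Qed.

(* [R] maps [X] isomorphically onto an initial segment of [W]; a relation is used so that
   building one requires no choice. *)
Record prefix_emb (X W : lstr) (R : X -> W -> Prop) : Prop := PrefixEmb {
  prefix_emb_total : forall x, exists t, R x t;
  prefix_emb_down : forall x t t', R x t -> os_lt t' t -> exists x', R x' t';
  prefix_emb_lt : forall x t x' t', R x t -> R x' t' -> (os_lt x x' <-> os_lt t t');
  prefix_emb_lab : forall x t, R x t -> ls_lab x = ls_lab t }.

Definition prefix_embeds (X W : lstr) : Prop := exists R : X -> W -> Prop, prefix_emb R.

Lemma prefix_emb_id (X : lstr) : prefix_emb (fun x y : X => x = y).
Proof.
split => [x|x _ t' <- _|x _ x' _ <- <-|x _ <-] //; by eexists.
Qed.

Lemma prefix_emb_comp (X Y Z : lstr) (R1 : X -> Y -> Prop) (R2 : Y -> Z -> Prop) :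
  prefix_emb R1 -> prefix_emb R2 -> prefix_emb (fun x z => exists y, R1 x y /\ R2 y z).
Proof.
case=> t1 d1 i1 l1 [t2 d2 i2 l2]; split.
- by move=> x; have [y hy] := t1 x; have [z hz] := t2 y; exists z, y.
- move=> x z z' [y [h1 h2]] lt; have [y' h2'] := d2 _ _ _ h2 lt.
  have [x' h1'] := d1 _ _ _ h1 (proj2 (i2 _ _ _ _ h2' h2) lt).
  by exists x', y'.
- by move=> x z x' z' [y [h1 h2]] [y' [h1' h2']]; rewrite (i1 _ _ _ _ h1 h1'); apply: i2.
- by move=> x z [y [h1 h2]]; rewrite (l1 _ _ h1) (l2 _ _ h2).
Qed.

Lemma prefix_embeds_trans (X Y Z : lstr) :
  prefix_embeds X Y -> prefix_embeds Y Z -> prefix_embeds X Z.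
Proof. by move=> [R1 h1] [R2 h2]; eexists; apply: prefix_emb_comp h1 h2. Qed.

Lemma sub_prefix_emb (X : lstr) (P : X -> Prop) :
  (forall s t, os_lt s t -> P t -> P s) -> prefix_emb (fun (s : subLS P) t => sval s = t).
Proof.
move=> P_down; split => [s|s _ t' <- lt|s _ s' _ <- <-|s _ <-] //; first by eexists.
by exists (exist P t' (P_down _ _ lt (svalP s))).
Qed.

Lemma suffix_prefix_emb (X W : lstr) (R : X -> W -> Prop) (x : X) (t : W) :
  prefix_emb R -> R x t ->
  prefix_emb (fun (s : Defs.suffix x) (s' : Defs.suffix t) => R (sval s) (sval s')).
Proof.
move=> [Rt Rd Rlt Rlab] Rxt; split.
- move=> [x' x'x]; have [t' h] := Rt x'.
  have t't : ~ os_lt t' t by move/(Rlt _ _ _ _ h Rxt).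
  by exists (exist _ t' t't).
- move=> [x1 _] [t1 _] [t2 t2t] /= h lt; have [x2 h2] := Rd _ _ _ h lt.
  have x2x : ~ os_lt x2 x by move/(Rlt _ _ _ _ h2 Rxt).
  by exists (exist _ x2 x2x).
- by move=> ? ? ? ?; apply: Rlt.
- by move=> ? ?; apply: Rlab.
Qed.

Lemma prefix_emb_unique (X W : lstr) (R1 R2 : X -> W -> Prop) :
  is_word X -> is_word W -> prefix_emb R1 -> prefix_emb R2 ->
  forall x t t', R1 x t -> R2 x t' -> t = t'.
Proof.
move=> hX hW [t1 d1 i1 _] [t2 d2 i2 _] x.
elim/(well_founded_ind (wo_wf hX)): x => x IH t t' h1 h2.
apply: (wo_eq_nlt hW) => lt.
- have [x' h2'] := d2 _ _ _ h2 lt; have x'x := proj2 (i2 _ _ _ _ h2' h2) lt.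
  have [t'' h1'] := t1 x'; have e := IH x' x'x t'' t h1' h2'; subst t''.
  exact: (wo_irrefl hW (proj1 (i1 _ _ _ _ h1' h1) x'x)).
- have [x' h1'] := d1 _ _ _ h1 lt; have x'x := proj2 (i1 _ _ _ _ h1' h1) lt.
  have [t'' h2'] := t2 x'; have e := IH x' x'x t' t'' h1' h2'; subst t''.
  exact: (wo_irrefl hW (proj1 (i2 _ _ _ _ h2' h2) x'x)).
Qed.

Lemma prefix_embeds_of_prefix (X W : lstr) : is_prefix X W -> prefix_embeds X W.
Proof.
case=> z [_ [f [g [gK fK f_lt f_lab]]]].
exists (fun x t => f t = inl x); split.
- by move=> x; exists (g (inl x)); rewrite fK.
- move=> x t t' e /f_lt; rewrite e.
  by case: (f t') => [x'|] // _; exists x'.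
- by move=> x t x' t' e e'; rewrite (f_lt t t') e e'.
- by move=> x t e; rewrite -f_lab e.
Qed.

Lemma prefix_of_prefix_embeds (X W : lstr) :
  is_word X -> is_word W -> prefix_embeds X W -> is_prefix X W.
Proof.
move=> hX hW [R [Rt Rd Rlt Rlab]].
pose Z := subLS (fun t : W => ~ exists x, R x t).
have hZ : is_word Z by apply: sub_word.
exists Z; split => //.
pose S t (p : concat X Z) := match p with inl x => R x t | inr z => sval z = t end.
apply: (word_eq_of_bij_rel (R := S)).
- exact: wo_strict_total.
- by apply: concat_strict_total; apply: wo_strict_total.
- move=> t; case: (classic (exists x, R x t)) => [[x h]|h].
  + by exists (inl x).
  + by exists (inr (exist _ t h)).
- by case=> [x|z]; [apply: Rt | exists (sval z)].
- move=> t [x|[t1 t1Z]] t' [x'|[t2 t2Z]] /= h h'; subst.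
  + by rewrite (Rlt _ _ _ _ h h').
  + split=> // _; apply: (wo_gt_nlt hW) => [lt|e].
    * by apply: t2Z; apply: Rd h lt.
    * by apply: t2Z; exists x; subst.
  + by split=> // lt; apply: t1Z; apply: Rd h' lt.
  + by [].
- by move=> t [x|z] /= h; [rewrite (Rlab _ _ h) | subst].
Qed.

Definition below (X : lstr) (m : X) := subLS (fun x : X => os_lt x m).
Definition above (X : lstr) (m : X) := subLS (fun x : X => os_lt m x).

Lemma word_eq_split (X Y : lstr) (m : X) (Q : Y -> X -> Prop) :
  is_word X -> is_word Y ->
  (forall y, exists x, Q y x) -> (forall x, os_lt x m -> exists y, Q y x) ->
  (forall y x, Q y x -> os_lt x m) ->
  (forall y x y' x', Q y x -> Q y' x' -> (os_lt y y' <-> os_lt x x')) ->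
  (forall y x, Q y x -> ls_lab y = ls_lab x) ->
  word_eq X (concat Y (concat (letter (ls_lab m)) (above m))).
Proof.
move=> hX hY Q_total Q_onto Q_bound Q_lt Q_lab.
pose S x (p : concat Y (concat (letter (ls_lab m)) (above m))) :=
  match p with inl y => Q y x | inr (inl _) => x = m | inr (inr z) => sval z = x end.
apply: (word_eq_of_bij_rel (R := S)).
- exact: wo_strict_total.
- apply: concat_strict_total; first exact: wo_strict_total.
  by apply: concat_strict_total; [apply: letter_strict_total | apply/wo_strict_total/sub_word].
- move=> x; case: (wo_total hX x m) => [/Q_onto [y h]|[->|mx]].
  + by exists (inl y).
  + by exists (inr (inl tt)).
  + by exists (inr (inr (exist _ x mx))).
- by case=> [y|[[]|z]]; [apply: Q_total | exists m | exists (sval z)].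
- move=> x [y|[[]|[z mz]]] x' [y'|[[]|[z' mz']]] /= h h'; subst => //.
  + by rewrite (Q_lt _ _ _ _ h h').
  + by split=> // _; apply: Q_bound h.
  + by split=> // _; apply: (wo_trans hX (Q_bound _ _ h) mz').
  + by split=> // /(wo_asym hX (Q_bound _ _ h')).
  + by split=> // /(wo_irrefl hX).
  + by split=> // lt; apply: (wo_asym hX mz); apply: (wo_trans hX lt (Q_bound _ _ h')).
  + by split=> // /(wo_asym hX mz).
- by move=> x [y|[[]|z]] /= h; subst => //; rewrite (Q_lab _ _ h).
Qed.

(* [px] and [pw] are the first positions at which [X] and [W] differ, and [R] matches
   their common prefix. *)
Record str_witness (X W : lstr) (px : X) (pw : W) (R : X -> W -> Prop) : Prop := StrWitness {
  str_witness_lab_lt : (ls_lab px < ls_lab pw)%O;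
  str_witness_total : forall x, os_lt x px -> exists t, R x t;
  str_witness_onto : forall t, os_lt t pw -> exists x, R x t;
  str_witness_bound : forall x t, R x t -> os_lt x px /\ os_lt t pw;
  str_witness_lt : forall x t x' t', R x t -> R x' t' -> (os_lt x x' <-> os_lt t t');
  str_witness_lab : forall x t, R x t -> ls_lab x = ls_lab t }.

Definition str_witnessed (X W : lstr) : Prop :=
  exists (px : X) (pw : W) (R : X -> W -> Prop), str_witness px pw R.

Lemma str_witnessed_of_str_lt (X W : lstr) : str_lt X W -> str_witnessed X W.
Proof.
case=> a [b [y [z [z' [ab _ [f1 [g1 [_ f1K f1_lt f1_lab]]] [f2 [g2 [_ f2K f2_lt f2_lab]]]]]]]].
exists (g1 (inr (inl tt))), (g2 (inr (inl tt))).
exists (fun x t => exists c, f1 x = inl c /\ f2 t = inl c); split.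
- by rewrite -f1_lab -f2_lab f1K f2K.
- move=> x; rewrite f1_lt f1K; case: (f1 x) => [c|[[]|]] // _.
  by exists (g2 (inl c)), c; rewrite f2K.
- move=> t; rewrite f2_lt f2K; case: (f2 t) => [c|[[]|]] // _.
  by exists (g1 (inl c)), c; rewrite f1K.
- by move=> x t [c [e1 e2]]; rewrite f1_lt f2_lt f1K f2K e1 e2.
- by move=> x t x' t' [c [e1 e2]] [c' [e1' e2']]; rewrite f1_lt f2_lt e1 e2 e1' e2'.
- by move=> x t [c [e1 e2]]; rewrite -f1_lab -f2_lab e1 e2.
Qed.

Lemma str_lt_of_str_witnessed (X W : lstr) :
  is_word X -> is_word W -> str_witnessed X W -> str_lt X W.
Proof.
move=> hX hW [px [pw [R [lab_lt R_total R_onto R_bound R_lt R_lab]]]].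
exists (ls_lab px), (ls_lab pw), (below px), (above px), (above pw); split.
- exact: lab_lt.
- by split; apply: sub_word.
- apply: (@word_eq_split X (below px) px (fun y x => sval y = x) hX (sub_word _ hX)).
  + by move=> y; exists (sval y).
  + by move=> x xm; exists (exist _ x xm).
  + by move=> [y ym] x <-.
  + by move=> y x y' x' <- <-.
  + by move=> y x <-.
- apply: (@word_eq_split W (below px) pw (fun y t => R (sval y) t) hW (sub_word _ hX)).
  + by move=> [y ym]; apply: R_total.
  + move=> t tm; have [x h] := R_onto t tm.
    by exists (exist _ x (proj1 (R_bound _ _ h))).
  + by move=> y t /R_bound [].
  + by move=> ? ? ? ?; apply: R_lt.
  + by move=> ? ?; apply: R_lab.
Qed.

Lemma str_witnessed_transfer (X W X' W' : lstr) :
  str_witnessed X W -> prefix_embeds X X' -> prefix_embeds W W' -> str_witnessed X' W'.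
Proof.
move=> [px [pw [R [lab_lt R_total R_onto R_bound R_lt R_lab]]]].
move=> [R1 [t1 d1 i1 l1]] [R2 [t2 d2 i2 l2]].
have [px' hpx] := t1 px; have [pw' hpw] := t2 pw.
exists px', pw', (fun x' t' => exists x t, [/\ R1 x x', R x t & R2 t t']); split.
- by rewrite -(l1 _ _ hpx) -(l2 _ _ hpw).
- move=> x' lt; have [x h1] := d1 _ _ _ hpx lt.
  have [t h] := R_total _ (proj2 (i1 _ _ _ _ h1 hpx) lt).
  by have [t' h2] := t2 t; exists t', x, t.
- move=> t' lt; have [t h2] := d2 _ _ _ hpw lt.
  have [x h] := R_onto _ (proj2 (i2 _ _ _ _ h2 hpw) lt).
  by have [x' h1] := t1 x; exists x', x, t.
- move=> x' t' [x [t [h1 h h2]]]; have [xp tp] := R_bound _ _ h.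
  by rewrite -(i1 _ _ _ _ h1 hpx) -(i2 _ _ _ _ h2 hpw).
- move=> x1' s1' x2' s2' [x1 [s1 [h1 h h2]]] [x2 [s2 [h1' h' h2']]].
  by rewrite -(i1 _ _ _ _ h1 h1') -(i2 _ _ _ _ h2 h2'); apply: R_lt.
- by move=> x' t' [x [t [h1 h h2]]]; rewrite -(l1 _ _ h1) -(l2 _ _ h2) (R_lab _ _ h).
Qed.

Lemma str_witnessed_irrefl (X : lstr) : is_word X -> ~ str_witnessed X X.
Proof.
move=> hX [px [pw [R [lab_lt R_total R_onto R_bound R_lt R_lab]]]].
have R_id x t : R x t -> t = x.
  elim/(well_founded_ind (wo_wf hX)): x t => x IH t h; have [xp tp] := R_bound _ _ h.
  apply: (wo_eq_nlt hX) => lt.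
  - have [t' h'] := R_total _ (wo_trans hX lt xp).
    have t'x : os_lt t' t by apply/(R_lt _ _ _ _ h' h).
    have e := IH _ lt _ h'; subst t'; exact: (wo_irrefl hX t'x).
  - have [x' h'] := R_onto _ (wo_trans hX lt tp).
    have x'x : os_lt x' x by apply/(R_lt _ _ _ _ h' h).
    have e := IH _ x'x _ h'; subst x'; exact: (wo_irrefl hX x'x).
case: (wo_total hX px pw) => [lt|[e|lt]].
- have [x h] := R_onto _ lt; have [xp _] := R_bound _ _ h.
  by rewrite -(R_id _ _ h) in xp; apply: (wo_irrefl hX xp).
- by rewrite e ltxx in lab_lt.
- have [t h] := R_total _ lt; have [_ tp] := R_bound _ _ h.
  by rewrite (R_id _ _ h) in tp; apply: (wo_irrefl hX tp).
Qed.

Lemma str_lt_transfer (X W X' W' : lstr) :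
  is_word X' -> is_word W' ->
  str_lt X W -> prefix_embeds X X' -> prefix_embeds W W' -> str_lt X' W'.
Proof.
move=> hX' hW' /str_witnessed_of_str_lt hs hX hW.
exact: str_lt_of_str_witnessed (str_witnessed_transfer hs hX hW).
Qed.

Lemma not_lex_le_proper_prefix (W V : lstr) (R : V -> W -> Prop) (b : W) :
  is_word W -> prefix_emb R -> (forall v t, R v t -> os_lt t b) -> ~ lex_le W V.
Proof.
move=> hW hR R_bound [/prefix_embeds_of_prefix [R1 hR1] | /str_witnessed_of_str_lt hs].
- have [s hs] := prefix_emb_total hR1 b; have [t ht] := prefix_emb_total hR s.
  have tb : t = b.
    apply: (prefix_emb_unique hW hW (prefix_emb_comp hR1 hR) (prefix_emb_id W)) => //.
    by exists s.
  by move: (R_bound _ _ ht); rewrite tb; apply: wo_irrefl.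
- apply: (str_witnessed_irrefl hW).
  apply: (str_witnessed_transfer hs); last by exists R.
  by exists (fun x y : W => x = y); apply: prefix_emb_id.
Qed.

Lemma word_eq_of_power_one (X y : lstr) (alpha : ostruct) :
  is_word X -> is_word y -> is_ordinal alpha -> is_one alpha ->
  word_eq X (power y alpha) -> word_eq y X.
Proof.
move=> hX hy halpha [a a_one] [f [g [gK fK f_lt f_lab]]].
have f_copy x : f x = (a, (f x).2) by rewrite -(a_one (f x).1) -surjective_pairing.
apply: (word_eq_of_bij_rel (R := fun i x => f x = (a, i))).
- exact: wo_strict_total.
- exact: wo_strict_total.
- by move=> i; exists (g (a, i)); rewrite fK.
- by move=> x; exists (f x).2; apply: f_copy.
- move=> i x i' x' e e'; rewrite f_lt e e'.
  by rewrite (power_lt_same_copy _ _ _ (wo_irrefl halpha)).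
- by move=> i x e; rewrite -f_lab e.
Qed.

Lemma prime_word_inhabited (X : lstr) : is_word X -> prime_word X -> inhabited X.
Proof.
move=> hX [hprim _]; apply: NNPP => empty.
pose zero := @OS False (fun _ _ => False).
have zero_ord : is_ordinal zero.
  split; try by case.
  by exists (fun x : zero => match x with end); case.
have : word_eq X (power X zero).
  apply: (word_eq_of_bij_rel (R := fun _ _ => False)) => //.
  - exact: wo_strict_total.
  - by apply: power_strict_total; apply: wo_strict_total.
  - by move=> x; case: empty.
  - by case.
by case/(hprim X zero hX zero_ord) => [[[]]].
Qed.

Section PowerSegment.
Variables (Z y : lstr) (alpha : ostruct).
Hypotheses (hZ : is_word Z) (hy : is_word y) (halpha : is_ordinal alpha).
Variables (f : Z -> power y alpha) (g : power y alpha -> Z).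
Hypotheses (gK : forall s, g (f s) = s) (fK : forall p, f (g p) = p).
Hypotheses (f_lt : forall s t, os_lt s t <-> os_lt (f s) (f t))
  (f_lab : forall s, ls_lab (f s) = ls_lab s).
Variable P : Z -> Prop.
Hypothesis P_down : forall s t, os_lt s t -> P t -> P s.
Variables (a0 a1 : alpha) (y0 : y).
Hypotheses (a0_min : forall a, ~ os_lt a a0) (a0a1 : os_lt a0 a1)
  (y0_min : forall i, ~ os_lt i y0) (P_a1 : P (g (a1, y0))).

Lemma g_lt p q : os_lt (g p) (g q) <-> os_lt p q.
Proof. by rewrite f_lt !fK. Qed.

Lemma copy_lt (c : alpha) (s t : Z) :
  (f s).1 = c -> (f t).1 = c -> (os_lt s t <-> os_lt (f s).2 (f t).2).
Proof.
rewrite f_lt; case: (f s) (f t) => [a i] [b j] /= -> ->.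
by apply: power_lt_same_copy; apply: wo_irrefl.
Qed.

Lemma P_copy0 i : P (g (a0, i)).
Proof. by apply: P_down P_a1; apply/g_lt; left. Qed.

Lemma P_copy_start d i : P (g (d, i)) -> P (g (d, y0)).
Proof.
move=> Pi; case: (wo_total hy y0 i) => [lt|[-> //|/y0_min //]].
by apply: P_down Pi; apply/g_lt; right.
Qed.

(* The suffix of the segment at the start of a straddling copy [d] stays inside copy [d], so
   it is a prefix of [y]; shifted onto the first copy it becomes a proper prefix of the
   segment. *)
Section Straddle.
Variables (d : alpha) (j : y).
Hypotheses (Pd : P (g (d, y0))) (Pj : ~ P (g (d, j))).

Lemma a0_lt_straddle : os_lt a0 d.
Proof.
by apply: (wo_gt_nlt halpha (@a0_min d)) => da0; apply: Pj; rewrite da0; apply: P_copy0.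
Qed.

Let e : subLS P := exist P (g (d, y0)) Pd.

Lemma straddle_suffix_copy (s : Defs.suffix e) : (f (sval (sval s))).1 = d.
Proof.
case: s => [[s Ps] /= se]; apply: (wo_eq_nlt halpha) => lt.
- by apply: se; rewrite /= f_lt fK; left.
- by apply: Pj; apply: P_down Ps; rewrite -[s]gK; apply/g_lt; left.
Qed.

Definition straddle_shift (s : Defs.suffix e) (w : subLS P) : Prop :=
  sval w = g (a0, (f (sval (sval s))).2).

Lemma straddle_shift_prefix_emb : prefix_emb straddle_shift.
Proof.
have s_copy (s : Defs.suffix e) : sval (sval s) = g (d, (f (sval (sval s))).2).
  by rewrite -(straddle_suffix_copy s) -surjective_pairing gK.
split; rewrite /straddle_shift.
- by move=> s; exists (exist P _ (P_copy0 (f (sval (sval s))).2)).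
- move=> s [w Pw] [w' Pw'] /= -> /f_lt; rewrite fK => lt.
  have w'_a0 : (f w').1 = a0.
    apply: (wo_eq_nlt halpha); first exact: a0_min.
    move=> a0w'; case: lt => [/(wo_asym halpha a0w') // | [w'a0 _]].
    by rewrite w'a0 in a0w'; apply: (wo_irrefl halpha a0w').
  have i_lt : os_lt (f w').2 (f (sval (sval s))).2.
    by case: lt => [|[_ //]]; rewrite w'_a0 => /(wo_irrefl halpha).
  have in_P : P (g (d, (f w').2)).
    by apply: P_down (svalP (sval s)); rewrite [X in os_lt _ X]s_copy; apply/g_lt; right.
  have not_lt_e : ~ @os_lt (subLS P) (exist P _ in_P) e.
    by move/g_lt => -[/(wo_irrefl halpha) | [_ /y0_min]].
  exists (exist _ (exist P _ in_P) not_lt_e).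
  by rewrite /= fK /= -w'_a0 -surjective_pairing gK.
- move=> s w s' w' ws w's'.
  apply: (iff_trans (copy_lt (straddle_suffix_copy s) (straddle_suffix_copy s'))).
  rewrite -(power_lt_same_copy a0 _ _ (wo_irrefl halpha)) -g_lt -ws -w's'.
  exact: iff_refl.
- by move=> s w /= ->; rewrite -(gK (sval (sval s))) -f_lab fK -f_lab fK.
Qed.

Lemma straddle_not_prime : ~ prime_word (subLS P).
Proof.
move=> [_ hlex].
apply: (not_lex_le_proper_prefix (b := e) (sub_word _ hZ) straddle_shift_prefix_emb).
- move=> s w; rewrite /straddle_shift => /= w_eq.
  by change (os_lt (sval w) (g (d, y0))); rewrite w_eq g_lt; left; apply: a0_lt_straddle.
- apply: hlex; exists (exist P _ (P_copy0 y0)).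
  by change (os_lt (g (a0, y0)) (g (d, y0))); rewrite g_lt; left; apply: a0_lt_straddle.
Qed.

End Straddle.

Lemma aligned_not_primitive :
  (forall d i j, P (g (d, i)) -> P (g (d, j))) -> ~ primitive (subLS P).
Proof.
move=> aligned hprim.
pose C := subOS (fun b : alpha => P (g (b, y0))).
have hC : is_ordinal C by apply: sub_wo.
have : word_eq (subLS P) (power y C).
  pose R (w : subLS P) (p : power y C) := sval w = g (sval p.1, p.2).
  apply: (word_eq_of_bij_rel (R := R)); rewrite /R.
  - by apply/wo_strict_total/sub_word.
  - by apply: power_strict_total; apply: wo_strict_total.
  - move=> [w Pw]; have Pf : P (g ((f w).1, (f w).2)) by rewrite -surjective_pairing gK.
    exists (exist _ (f w).1 (aligned _ _ y0 Pf) : C, (f w).2).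
    by rewrite /= -surjective_pairing gK.
  - move=> [c i]; exists (exist P _ (aligned _ _ i (svalP c))) => //.
  - move=> w [c i] w' [c' i'] /= -> ->; rewrite g_lt /=.
    split=> [[|[/sval_inj]]|[|[->]]]; by [left | right].
  - by move=> w [c i] /= ->; rewrite -f_lab fK.
case/(hprim y C hy hC) => [[c c_one] _].
have : exist _ a0 (P_copy0 y0) = exist _ a1 P_a1 :> C.
  by rewrite (c_one (exist _ a0 _)) (c_one (exist _ a1 _)).
by move=> /(f_equal sval) /= a0_a1; move: a0a1; rewrite a0_a1; apply: wo_irrefl.
Qed.

Lemma power_segment_not_prime : ~ prime_word (subLS P).
Proof.
move=> hprime.
case: (classic (exists d i j, P (g (d, i)) /\ ~ P (g (d, j)))).
- move=> [d [i [j [Pi Pj]]]].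
  exact: (straddle_not_prime (P_copy_start Pi) Pj hprime).
- move=> no_straddle; apply: (aligned_not_primitive _ hprime.1) => d i j Pi.
  by apply: NNPP => Pj; apply: no_straddle; exists d, i, j.
Qed.

End PowerSegment.

End Words.

Section OmegaProduct.
Context {disp : Order.disp_t} {A : finOrderType disp}.
Notation lstr := (@lstruct disp A).
Variable u : nat -> lstr.

Lemma omega_lt_same (k : nat) (i j : u k) :
  omega_lt (existT _ k i) (existT _ k j) <-> os_lt i j.
Proof.
split=> [[|[k' [i' [j' [ei ej lt]]]]] | lt]; first by rewrite /= ltnn.
- have kk' : k = k' by move: (f_equal (@projT1 _ _) ei).
  subst k'.
  by rewrite (inj_pair2_eq_dec _ Nat.eq_dec _ _ _ _ ei) (inj_pair2_eq_dec _ Nat.eq_dec _ _ _ _ ej).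
- by right; exists k, i, j.
Qed.

Lemma omega_lt_idx_le (p q : {k : nat & u k}) : omega_lt p q -> (projT1 p <= projT1 q)%N.
Proof. by case=> [/ltnW //|[k [i [j [-> -> _]]]]]. Qed.

Lemma omega_lt_idx_lt (p q : {k : nat & u k}) :
  omega_lt p q -> projT1 p <> projT1 q -> (projT1 p < projT1 q)%N.
Proof. by case=> [//|[k [i [j [-> -> _]]]]]. Qed.

Definition pos_upto (q : omega_prod u) (n : nat) (H : (projT1 q <= n)%N) : prod_upto u n :=
  exist _ q H.

Lemma prod_upto_prefix_emb n :
  prefix_emb (fun (q : prod_upto u n) (t : omega_prod u) => sval q = t).
Proof.
apply: (sub_prefix_emb (P := fun q : omega_prod u => is_true (projT1 q <= n)%N)).
by move=> s t /omega_lt_idx_le; apply: leq_trans.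
Qed.

Lemma prod_upto_incl n m : (n <= m)%N ->
  prefix_emb (fun (q : prod_upto u n) (t : prod_upto u m) => sval q = sval t).
Proof.
move=> nm; split.
- by move=> q; exists (pos_upto (leq_trans (svalP q) nm)).
- move=> q t t' qt t't; have lt : omega_lt (sval t') (sval q) by rewrite qt.
  by exists (pos_upto (leq_trans (omega_lt_idx_le lt) (svalP q))).
- by move=> q t q' t' /= -> ->.
- by move=> q t /= ->.
Qed.

Hypothesis hu : forall n, is_word (u n).

Lemma omega_prod_word : is_word (omega_prod u).
Proof.
split.
- by case=> k i /omega_lt_same; apply: (wo_irrefl (hu k)).
- case=> k i [l j] [m h] /=; case: (Nat.eq_dec k l) => [kl|kl] ij.
  + subst l; case: (Nat.eq_dec k m) => [km|km] jh.
    * subst m; move: ij jh => /omega_lt_same ij /omega_lt_same jh.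
      by apply/omega_lt_same; apply: (wo_trans (hu k) ij jh).
    * by left; apply: (omega_lt_idx_lt jh).
  + by move=> /omega_lt_idx_le lm; left; apply: leq_trans (omega_lt_idx_lt ij kl) lm.
- case=> k i [l j]; case: (ltngtP k l) => [kl|lk|kl]; [by left; left | by right; right; left |].
  subst l; case: (wo_total (hu k) i j) => [ij|[->|ji]].
  + by left; apply/omega_lt_same.
  + by right; left.
  + by right; right; apply/omega_lt_same.
- have acc k (i : u k) : Acc (@os_lt (omega_prod u)) (existT _ k i).
    elim/(well_founded_ind Nat.lt_wf_0): k i => k IHk i.
    elim/(well_founded_ind (wo_wf (hu k))): i => i IHi.
    constructor=> -[l j]; case: (Nat.eq_dec l k) => [lk|lk].
    + by subst l; move/omega_lt_same; apply: IHi.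
    + by move=> /omega_lt_idx_lt /(_ lk) /ssrnat.ltP lk'; apply: IHk lk' j.
  by case=> k i; apply: acc.
- have code k : {c : u k -> nat | injective c}.
    by apply: constructive_indefinite_description; case: (hu k).
  exists (fun p => pickle (projT1 p, sval (code (projT1 p)) (projT2 p))).
  by case=> k i [l j] /= /(pcan_inj pickleK_inv) [kl]; subst l => /(svalP (code k)) ->.
Qed.

Lemma prod_upto_word n : is_word (prod_upto u n).
Proof.
exact: (sub_word (fun q : omega_prod u => is_true (projT1 q <= n)%N) omega_prod_word).
Qed.

Lemma prefix_emb_prod_upto_coherent (W : lstr) n m (q : omega_prod u)
    (Hn : (projT1 q <= n)%N) (Hm : (projT1 q <= m)%N)
    (Rn : prod_upto u n -> W -> Prop) (Rm : prod_upto u m -> W -> Prop) (t t' : W) :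
  is_word W -> prefix_emb Rn -> prefix_emb Rm -> Rn (pos_upto Hn) t -> Rm (pos_upto Hm) t' ->
  t = t'.
Proof.
move=> hW; wlog nm : n m Hn Hm Rn Rm t t' / (n <= m)%N => [wlog|hRn hRm hn hm].
  case: (leqP n m) => [|/ltnW] le hRn hRm hn hm; first exact: wlog hn hm.
  by symmetry; apply: wlog hm hn.
have hRnm := prefix_emb_comp (prod_upto_incl nm) hRm.
by apply: (prefix_emb_unique (prod_upto_word n) hW hRn hRnm hn); exists (pos_upto Hm).
Qed.

Lemma prefix_embeds_omega_prod (W : lstr) :
  is_word W -> (forall n, prefix_embeds (prod_upto u n) W) -> prefix_embeds (omega_prod u) W.
Proof.
move=> hW emb.
exists (fun q t => exists n (H : (projT1 q <= n)%N) (Rn : prod_upto u n -> W -> Prop),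
          prefix_emb Rn /\ Rn (pos_upto H) t); split.
- move=> q; have [Rn hRn] := emb (projT1 q).
  have [t ht] := prefix_emb_total hRn (pos_upto (leqnn _)).
  by exists t, (projT1 q), (leqnn _), Rn.
- move=> q t t' [n [H [Rn [hRn h]]]] lt; have [[q' H'] h'] := prefix_emb_down hRn h lt.
  by exists q', n, H', Rn.
- move=> q t q' t' [n [H [Rn [hRn h]]]] [m [H' [Rm [hRm h']]]].
  have HN : (projT1 q <= maxn n m)%N by rewrite (leq_trans H) ?leq_maxl.
  have HN' : (projT1 q' <= maxn n m)%N by rewrite (leq_trans H') ?leq_maxr.
  have [RN hRN] := emb (maxn n m).
  have [t1 h1] := prefix_emb_total hRN (pos_upto HN).
  have [t2 h2] := prefix_emb_total hRN (pos_upto HN').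
  rewrite (prefix_emb_prod_upto_coherent hW hRn hRN h h1).
  rewrite (prefix_emb_prod_upto_coherent hW hRm hRN h' h2).
  exact: (prefix_emb_lt hRN h1 h2).
- by move=> q t [n [H [Rn [hRn h]]]]; apply: (prefix_emb_lab hRn h).
Qed.

Hypothesis hpr : forall n, prime_word (prod_upto u n).

Lemma omega_prod_suffix_lex (gamma : omega_prod u) :
  (exists delta, os_lt delta gamma) -> lex_le (omega_prod u) (Defs.suffix gamma).
Proof.
move=> [delta delta_gamma].
have hsuf := suffix_word gamma omega_prod_word.
pose k := projT1 gamma.
have lex_n n (H : (k <= n)%N) : lex_le (prod_upto u n) (Defs.suffix (pos_upto H)).
  apply: (hpr n).2; exists (pos_upto (leq_trans (omega_lt_idx_le delta_gamma) H)).
  exact: delta_gamma.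
have suffix_emb n (H : (k <= n)%N) :
    prefix_embeds (Defs.suffix (pos_upto H)) (Defs.suffix gamma).
  by eexists; apply: (suffix_prefix_emb (prod_upto_prefix_emb n)).
case: (classic (exists n (H : (k <= n)%N),
                 str_lt (prod_upto u n) (Defs.suffix (pos_upto H)))).
- move=> [n [H hs]]; right.
  apply: (str_lt_transfer omega_prod_word hsuf hs _ (suffix_emb n H)).
  by eexists; apply: prod_upto_prefix_emb.
- move=> no_str; left; apply: (prefix_of_prefix_embeds omega_prod_word hsuf).
  apply: (prefix_embeds_omega_prod hsuf) => n.
  have H : (k <= maxn n k)%N by apply: leq_maxr.
  have hp : prefix_embeds (prod_upto u (maxn n k)) (Defs.suffix (pos_upto H)).
    case: (lex_n _ H) => [/prefix_embeds_of_prefix // | hs].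
    by case: no_str; exists (maxn n k), H.
  apply: (prefix_embeds_trans _ (prefix_embeds_trans hp (suffix_emb _ H))).
  by eexists; apply: (prod_upto_incl (leq_maxl n k)).
Qed.

Lemma omega_prod_primitive : primitive (omega_prod u).
Proof.
move=> y alpha hy halpha hiso; have [f [g [gK fK f_lt f_lab]]] := hiso.
have [[q0 _]] := prime_word_inhabited (prod_upto_word 0) (hpr 0).
have [a0 a0_min] := wo_min halpha (f q0).1.
have [y0 y0_min] := wo_min hy (f q0).2.
case: (classic (is_one alpha)) => [alpha_one | alpha_many].
  by split=> //; apply: (word_eq_of_power_one omega_prod_word hy halpha alpha_one hiso).
have [a1 a1a0] : exists a1, a1 <> a0.
  apply: NNPP => all_a0; apply: alpha_many; exists a0 => b.
  by apply: NNPP => ba0; apply: all_a0; exists b.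
have a0a1 := wo_gt_nlt halpha (@a0_min a1) a1a0.
case: (power_segment_not_prime omega_prod_word hy halpha gK fK f_lt f_lab
        (P := fun q => is_true (projT1 q <= projT1 (g (a1, y0)))%N) _ a0_min a0a1 y0_min _ (hpr _)).
- by move=> s t /omega_lt_idx_le; apply: leq_trans.
- exact: leqnn.
Qed.

End OmegaProduct.

Unset Implicit Arguments.

Theorem mainTheorem5 (disp : Order.disp_t) (A : finOrderType disp)
  (u : nat -> @lstruct disp A) :
  (forall n, is_word (u n)) ->
  (forall n, prime_word (prod_upto u n)) ->
  prime_word (omega_prod u).
Proof.
move=> hu hpr; split; first exact: omega_prod_primitive.
exact: omega_prod_suffix_lex.
Qed.
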